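(* Let $Z$ be a reflection positive volume-dependent field theory, let $\Sigma_0,\Sigma_1$ be nonempty closed $(n-1)$-manifolds, and for each $\lambda\in\Lambda_{\Sigma_0,\Sigma_1}$ let $f_\lambda:\mathcal H^\lambda_{\Sigma_0}\to\mathcal H^\lambda_{\Sigma_1}$ be a linear map. Then the not necessarily bounded operator $f^{Hilb}=\sum_{\lambda\in\Lambda_{\Sigma_0,\Sigma_1}}\iota_{1,\lambda}\circ f_\lambda\circ\pi_{0,\lambda}$ from $\mathcal H_{\Sigma_0}$ to $\mathcal H_{\Sigma_1}$ is induced from a morphism of nuclear pairs $(\check f,\hat f)$ from $\check E_{\Sigma_0}\subset\mathcal H_{\Sigma_0}\subset\hat E_{\Sigma_0}$ to $\check E_{\Sigma_1}\subset\mathcal H_{\Sigma_1}\subset\hat E_{\Sigma_1}$ (i.e. continuous $\check f:\check E_{\Sigma_0}\to\check E_{\Sigma_1}$, $\hat f:\hat E_{\Sigma_0}\to\hat E_{\Sigma_1}$ commuting with the inclusions, with $f^{Hilb}$ equal to $\check f$ on $\check E_{\Sigma_0}$) if and only if for all $t>0$ there exists $C>0$ with $\|f_\lambda\|<Ce^{t\lambda}$ for every $\lambda\in\Lambda_{\Sigma_0,\Sigma_1}$.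
   Context: A reflection positive volume-dependent field theory $Z$ (a nuclear, holomorphic, coherent symmetric monoidal functor from $n$-dimensional bordisms of germs equipped with complex densities of positive real part to nuclear pairs — continuous injective dense maps from nuclear dual Fréchet to nuclear Fréchet spaces — which is equivariant for reflection/conjugation and sends reflection-fixed objects to Hermitian nuclear pairs) assigns to each closed $(n-1)$-manifold $\Sigma$ (using a fixed translation-invariant density $\nu_\Sigma\wedge dt$ on $\Sigma\times\mathbb R$, $\nu_\Sigma$ positive of volume 1) a Hilbert space $\mathcal H_\Sigma$ and a self-adjoint operator $H_\Sigma$ with discrete spectrum bounded below and finite-dimensional eigenspaces $\mathcal H_\Sigma^\lambda$, such that cylinders $\Sigma\times I$ of complex volume $s$ act by $\exp(-sH_\Sigma)$; for disconnected $\Sigma$, $\mathcal H_\Sigma$ is the tensor product over components and $H_\Sigma$ the sum of the component Hamiltonians. The Hermitian nuclear pair assigned to $\Sigma$ is $\check E_\Sigma\subset\mathcal H_\Sigma\subset\hat E_\Sigma$ where, writing elements as families $(v_\lambda)\in\prod_{\lambda\in\mathrm{Spec}(H_\Sigma)}\mathcal H^\lambda_\Sigma$: $\check E_\Sigma=\{(v_\lambda):\exists\tau\in\mathbb C_{>0},\ (e^{\tau\lambda}v_\lambda)\in\mathcal H_\Sigma\}$ (colimit of copies of $\mathcal H_\Sigma$ under $e^{-\tau H_\Sigma}$) and $\hat E_\Sigma=\{(v_\lambda):\forall\tau\in\mathbb C_{>0},\ (e^{-\tau\lambda}v_\lambda)\in\mathcal H_\Sigma\}$ with the Fréchet topology given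 by the seminorms $(v_\lambda)\mapsto\|(e^{-\tau_i\lambda}v_\lambda)\|$ for a sequence $\tau_i$ with real parts decreasing to $0$. $\Lambda_{\Sigma_0,\Sigma_1}=\mathrm{Spec}(H_{\Sigma_0})\cap\mathrm{Spec}(H_{\Sigma_1})$; $\pi_{k,\lambda}:\mathcal H_{\Sigma_k}\to\mathcal H^\lambda_{\Sigma_k}$ is the orthogonal projection and $\iota_{k,\lambda}$ the inclusion. *)

From HB Require Import structures.
From mathcomp Require Import all_boot all_order all_algebra.
From mathcomp Require Import complex.
From mathcomp Require Import all_classical all_reals all_analysis.
Unset Printing Implicit Defensive.
Import Order.TTheory GRing.Theory Num.Theory.
Local Open Scope ring_scope.
Local Open Scope classical_set_scope.

Section SpectralData.
Variable R : realType.

(* The eigenspace H^l of dimension d l is modelled (via an orthonormal basis)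
   as C^(d l) = 'cV[R[i]]_(d l) with its standard Hermitian inner product. *)

Definition sqnorm (n : nat) (v : 'cV[R[i]]_n) : R :=
  \sum_(i < n) (complex.Re (v i 0) ^+ 2 + complex.Im (v i 0) ^+ 2).

Definition opnorm (m n : nat) (A : 'M[R[i]]_(m, n)) : R :=
  sup [set x : R | exists2 v : 'cV[R[i]]_n, sqnorm _ v <= 1 &
                     x = Num.sqrt (sqnorm _ (A *m v))].

Definition spectrum (d : R -> nat) : set R := [set l | (0 < d l)%N].

(* discrete spectrum, bounded below, finite-dimensional eigenspaces *)
Definition discrete_spectral_data (d : R -> nat) : Prop :=
  forall c : R, finite_set [set l | (0 < d l)%N /\ l <= c].

Definition fam (d : R -> nat) := forall l : R, 'cV[R[i]]_(d l).

Definition wnorm2 (d : R -> nat) (tau : R) (v : fam d) : \bar R :=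
  \esum_(l in [set: R]) (expR (2 * tau * l) * sqnorm _ (v l))%:E.

Definition Hilb (d : R -> nat) : set (fam d) :=
  [set v | (wnorm2 d 0 v < +oo)%E].

Definition Echeck (d : R -> nat) : set (fam d) :=
  [set v | exists2 tau : R, 0 < tau & (wnorm2 d tau v < +oo)%E].

Definition Ehat (d : R -> nat) : set (fam d) :=
  [set v | forall tau : R, 0 < tau -> (wnorm2 d (- tau) v < +oo)%E].

Definition linear_on (d0 d1 : R -> nat) (P : set (fam d0))
  (f : fam d0 -> fam d1) : Prop :=
  forall (a : R[i]) (u v : fam d0), P u -> P v ->
    f (fun l => a *: u l + v l) = (fun l => a *: f u l + f v l).

(* continuity of a linear map E-check_0 -> E-check_1 (colimit topology):
   each step H_tau = {v | wnorm2 tau v < oo} maps boundedly into some step *)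
Definition cont_check (d0 d1 : R -> nat) (f : fam d0 -> fam d1) : Prop :=
  forall tau : R, 0 < tau -> exists2 tau' : R, 0 < tau' &
    exists2 C : R, 0 < C & forall v : fam d0, (wnorm2 d0 tau v < +oo)%E ->
      (wnorm2 d1 tau' (f v) <= C%:E * wnorm2 d0 tau v)%E.

(* continuity of a linear map E-hat_0 -> E-hat_1 (Frechet topology given by
   the seminorms v |-> ||(e^{-tau l} v_l)||, tau > 0) *)
Definition cont_hat (d0 d1 : R -> nat) (f : fam d0 -> fam d1) : Prop :=
  forall tau' : R, 0 < tau' -> exists2 tau : R, 0 < tau &
    exists2 C : R, 0 < C & forall v : fam d0, Ehat d0 v ->
      (wnorm2 d1 (- tau') (f v) <= C%:E * wnorm2 d0 (- tau) v)%E.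

Definition nuclear_pair_morphism (d0 d1 : R -> nat)
  (fcheck fhat : fam d0 -> fam d1) : Prop :=
  [/\ (forall v, Echeck d0 v -> Echeck d1 (fcheck v)),
      (forall v, Ehat d0 v -> Ehat d1 (fhat v)),
      linear_on _ _ (Echeck d0) fcheck /\ linear_on _ _ (Ehat d0) fhat,
      cont_check _ _ fcheck /\ cont_hat _ _ fhat &
      (* commutes with the inclusions E-check into E-hat *)
      forall v, Echeck d0 v -> fhat v = fcheck v].

(* f^Hilb = sum_{l in Lambda} iota_{1,l} o f_l o pi_{0,l}; for l outside
   Lambda = Spec0 cap Spec1 the matrix f l has a zero dimension, so is 0. *)
Definition fHilb (d0 d1 : R -> nat) (f : forall l : R, 'M[R[i]]_(d1 l, d0 l))
  (v : fam d0) : fam d1 := fun l => f l *m v l.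

End SpectralData.
Arguments sqnorm {R n}.
Arguments opnorm {R m n}.
Arguments spectrum {R}.
Arguments discrete_spectral_data {R}.
Arguments fam {R}.
Arguments wnorm2 {R}.
Arguments Hilb {R}.
Arguments Echeck {R}.
Arguments Ehat {R}.
Arguments linear_on {R d0 d1}.
Arguments cont_check {R d0 d1}.
Arguments cont_hat {R d0 d1}.
Arguments nuclear_pair_morphism {R d0 d1}.
Arguments fHilb {R d0 d1}.

From HB Require Import structures.
From mathcomp Require Import all_boot all_order all_algebra.
From mathcomp Require Import complex.
From mathcomp Require Import all_classical all_reals all_analysis.
From mathcomp Require Import ring lra.
Import Order.TTheory GRing.Theory Num.Theory numFieldNormedType.Exports.
Local Open Scope ring_scope.
Local Open Scope classical_set_scope.
Set Implicit Arguments.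
Unset Strict Implicit.

(* The operator f^Hilb acts eigenvalue by eigenvalue, so the
   weighted norms ||(e^(tau l) v_l)|| of v and of f^Hilb v can be compared
   termwise.  If ||f_l|| <= C e^(t l), then f^Hilb maps the weight tau to the
   weight tau - t with norm at most C; taking t = tau/2 gives continuity both
   on E-check (a colimit over tau > 0) and on E-hat (a limit over -tau < 0).
   Conversely, continuity of f-check from the weight t to some weight tau' > 0,
   tested on vectors concentrated on a single eigenvalue l, gives
   e^(2 tau' l) ||f_l w||^2 <= C e^(2 t l) ||w||^2; as Spec(H_0) is bounded
   below by -M, the factor e^(-tau' l) is at most e^(tau' M), whence
   ||f_l|| <= sqrt C e^(tau' M) e^(t l). *)

Section SquaredModulus.
Variable R : realFieldType.
Implicit Types z w : R[i].

Definition sqmod z : R := complex.Re z ^+ 2 + complex.Im z ^+ 2.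

Lemma sqmod_ge0 z : 0 <= sqmod z.
Proof. by rewrite /sqmod addr_ge0 // sqr_ge0. Qed.

Lemma sqmod0 : sqmod 0 = 0.
Proof. by rewrite /sqmod /= expr0n /= addr0. Qed.

Lemma sqmodM z w : sqmod (z * w) = sqmod z * sqmod w.
Proof. by case: z w => a b [c d]; rewrite /sqmod /=; ring. Qed.

Lemma sqmod_real (c : R) : sqmod (Complex c 0) = c ^+ 2.
Proof. by rewrite /sqmod /= expr0n /= addr0. Qed.

Lemma sqmodD_le z w : sqmod (z + w) <= 2 * (sqmod z + sqmod w).
Proof.
case: z w => a b [c d]; rewrite /sqmod /= -subr_ge0.
have -> : 2 * (a ^+ 2 + b ^+ 2 + (c ^+ 2 + d ^+ 2)) - ((a + c) ^+ 2 + (b + d) ^+ 2)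
  = (a - c) ^+ 2 + (b - d) ^+ 2 by ring.
by rewrite addr_ge0 // sqr_ge0.
Qed.

Lemma sqmod_sum_le n (z : 'I_n -> R[i]) :
  sqmod (\sum_(j < n) z j) <= 2 ^+ n * \sum_(j < n) sqmod (z j).
Proof.
elim: n z => [|n IH] z; first by rewrite !big_ord0 sqmod0.
rewrite !big_ord_recr /=; apply: le_trans (sqmodD_le _ _) _.
have IHz := IH (fun j => z (widen_ord (leqnSn n) j)).
have S0 : 0 <= \sum_(j < n) sqmod (z (widen_ord (leqnSn n) j)).
  by apply: sumr_ge0 => j _; apply: sqmod_ge0.
have z0 := sqmod_ge0 (z ord_max).
have e1 : 1 <= 2 ^+ n :> R by rewrite exprn_ege1 // ler1n.
rewrite exprS; nra.
Qed.

End SquaredModulus.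

Section MatrixNorms.
Variable R : realType.

Lemma sqnormE n (v : 'cV[R[i]]_n) : sqnorm v = \sum_(j < n) sqmod (v j 0).
Proof. by []. Qed.

Lemma sqnorm_ge0 n (v : 'cV[R[i]]_n) : 0 <= sqnorm v.
Proof. by apply: sumr_ge0 => j _; apply: sqmod_ge0. Qed.

Lemma sqmod_le_sqnorm n (v : 'cV[R[i]]_n) j : sqmod (v j 0) <= sqnorm v.
Proof.
rewrite sqnormE (bigD1 j) //= lerDl.
by apply: sumr_ge0 => k _; apply: sqmod_ge0.
Qed.

Lemma sqnorm0 n : sqnorm (0 : 'cV[R[i]]_n) = 0.
Proof. by rewrite sqnormE big1 // => j _; rewrite mxE sqmod0. Qed.

Lemma sqnormZ n (c : R) (v : 'cV[R[i]]_n) :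
  sqnorm (Complex c 0 *: v) = c ^+ 2 * sqnorm v.
Proof.
by rewrite !sqnormE mulr_sumr; apply: eq_bigr => j _; rewrite mxE sqmodM sqmod_real.
Qed.

Lemma sqnorm_mul_ball_le m n (A : 'M[R[i]]_(m, n)) (v : 'cV[R[i]]_n) :
  sqnorm v <= 1 ->
  sqnorm (A *m v) <= \sum_(i < m) 2 ^+ n * \sum_(j < n) sqmod (A i j).
Proof.
move=> v1; rewrite sqnormE; apply: ler_sum => i _; rewrite mxE.
apply: le_trans (sqmod_sum_le _) _; apply: ler_wpM2l; first exact: exprn_ge0.
apply: ler_sum => j _; rewrite sqmodM -[leRHS]mulr1.
apply: ler_wpM2l; first exact: sqmod_ge0.
exact: le_trans (sqmod_le_sqnorm _ _) v1.
Qed.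

Lemma opnorm_set_has_ubound m n (A : 'M[R[i]]_(m, n)) :
  has_ubound [set x : R | exists2 v : 'cV[R[i]]_n, sqnorm v <= 1 &
                            x = Num.sqrt (sqnorm (A *m v))].
Proof.
exists (Num.sqrt (\sum_(i < m) 2 ^+ n * \sum_(j < n) sqmod (A i j))) => _ [v v1 ->].
by rewrite ler_wsqrtr // sqnorm_mul_ball_le.
Qed.

Lemma opnorm_ub m n (A : 'M[R[i]]_(m, n)) v :
  sqnorm v <= 1 -> Num.sqrt (sqnorm (A *m v)) <= opnorm A.
Proof. by move=> v1; apply: (ub_le_sup (opnorm_set_has_ubound A)); exists v. Qed.

Lemma opnorm_ge0 m n (A : 'M[R[i]]_(m, n)) : 0 <= opnorm A.
Proof. by apply: le_trans (opnorm_ub A (v := 0) _); rewrite ?sqrtr_ge0 ?sqnorm0. Qed.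

Lemma opnorm_le m n (A : 'M[R[i]]_(m, n)) (K : R) : 0 <= K ->
  (forall v, sqnorm (A *m v) <= K ^+ 2 * sqnorm v) -> opnorm A <= K.
Proof.
move=> K0 AK; apply: ge_sup; first by exists 0, 0; rewrite ?mulmx0 sqnorm0 ?sqrtr0.
move=> _ [v v1 ->]; rewrite -(ger0_norm K0) -sqrtr_sqr ler_wsqrtr //.
by apply: le_trans (AK v) _; rewrite ler_piMr ?sqr_ge0.
Qed.

Lemma opnorm_dim0 m n (A : 'M[R[i]]_(m, n)) : (m = 0 \/ n = 0)%N -> opnorm A = 0.
Proof.
move=> mn0; apply/le_anti; rewrite opnorm_ge0 andbT opnorm_le // => v.
rewrite expr0n mul0r; case: mn0 => ?; subst.
  by rewrite sqnormE big_ord0.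
by rewrite thinmx0 mul0mx sqnorm0.
Qed.

Lemma sqnorm_mul_le_opnorm_ball m n (A : 'M[R[i]]_(m, n)) v (s : R) :
  0 < s -> sqnorm v <= s ^+ 2 -> sqnorm (A *m v) <= opnorm A ^+ 2 * s ^+ 2.
Proof.
move=> s0 vs; have s20 : 0 < s ^+ 2 by rewrite exprn_gt0.
have w1 : sqnorm (Complex s^-1 0 *: v) <= 1.
  by rewrite sqnormZ exprVn mulrC ler_pdivrMr // mul1r.
have := opnorm_ub A w1; rewrite -scalemxAr sqnormZ exprVn.
rewrite -(ler_sqr (sqrtr_ge0 _) (opnorm_ge0 A)) sqr_sqrtr; last first.
  by rewrite mulr_ge0 ?sqnorm_ge0 // invr_ge0 sqr_ge0.
by rewrite mulrC ler_pdivrMr.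
Qed.

Lemma sqnorm_mul_le_opnorm m n (A : 'M[R[i]]_(m, n)) v :
  sqnorm (A *m v) <= opnorm A ^+ 2 * sqnorm v.
Proof.
set c := opnorm A ^+ 2; have c0 : 0 <= c by rewrite sqr_ge0.
(* Rescale [v] into the unit ball; the slack [e'] takes care of [v = 0]. *)
apply/ler_addgt0Pr => e e0; set e' := e / (c + 1).
have e'0 : 0 < e' by rewrite divr_gt0 // ltr_wpDl.
have ve0 : 0 < sqnorm v + e' by rewrite ltr_wpDl ?sqnorm_ge0.
have s0 : 0 < Num.sqrt (sqnorm v + e') by rewrite sqrtr_gt0.
have ve : sqnorm v <= Num.sqrt (sqnorm v + e') ^+ 2.
  by rewrite (sqr_sqrtr (ltW ve0)) lerDl ltW.
apply: le_trans (sqnorm_mul_le_opnorm_ball A s0 ve) _.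
rewrite (sqr_sqrtr (ltW ve0)) mulrDr lerD2l /e' mulrCA.
apply: ler_piMr; first exact: ltW.
by rewrite ler_pdivrMr ?mul1r ?lerDl // ltr_wpDl.
Qed.

End MatrixNorms.

Section ExtendedSums.
Variables (R : realType) (T : choiceType).
Local Open Scope ereal_scope.

Lemma le_esumZl (I : set T) (c : R) (a : T -> \bar R) :
  (0 <= c)%R -> (forall x, 0 <= a x) ->
  \esum_(i in I) (c%:E * a i) <= c%:E * \esum_(i in I) a i.
Proof.
move=> c0 a0; apply: ge_ereal_sup => _ [X [finX XI]] <-.
rewrite fsbig_finite // -ge0_sume_distrr //; apply: lee_wpmul2l; first by rewrite lee_fin.
by rewrite -fsbig_finite //; apply: ereal_sup_ubound; exists X.
Qed.

Lemma esumT_support1 (a : T -> \bar R) t :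
  (forall x, 0 <= a x) -> (forall x, x != t -> a x = 0) ->
  \esum_(x in [set: T]) a x = a t.
Proof.
move=> a0 at0; rewrite -(@esum_set1 _ _ t a) // [RHS]esum_mkcond.
apply: eq_esum => x _; case: ifPn => // xt; apply: at0.
by apply: contraNneq xt => ->; rewrite mem_set.
Qed.

End ExtendedSums.

Section SpectralFamilies.
Variable R : realType.

Lemma spectrum_bounded_below (d : R -> nat) : discrete_spectral_data d ->
  exists M : R, forall l, spectrum d l -> - l <= M.
Proof.
move=> hd; have [M [_ Mbound]] := compact_bounded (finite_compact (hd 0)).
exists (`|M| + 1) => l dl; have [l0|l0] := leP l 0.
  apply: le_trans (ler_norm (- l)) _; rewrite normrN.
  by apply: (Mbound (`|M| + 1)) => //; apply: le_lt_trans (ler_norm M) _; rewrite ltrDl.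
by apply: le_trans (_ : 0 <= _); rewrite ?oppr_le0 ?ltW // addr_ge0.
Qed.

Definition delta_fam (d : R -> nat) (l : R) (w : 'cV[R[i]]_(d l)) : fam d :=
  fun l' => match l =P l' with
            | ReflectT e => eq_rect l (fun x => 'cV[R[i]]_(d x)) w l' e
            | ReflectF _ => 0
            end.

Lemma delta_fam_eq d l (w : 'cV[R[i]]_(d l)) : delta_fam w l = w.
Proof.
by rewrite /delta_fam; case: (l =P l) => // e; rewrite (eq_irrelevance e erefl).
Qed.

Lemma delta_fam_neq d l (w : 'cV[R[i]]_(d l)) l' : l' != l -> delta_fam w l' = 0.
Proof.
by move=> l0l; rewrite /delta_fam; case: (l =P l') => // ll0; rewrite ll0 eqxx in l0l.
Qed.

Lemma fHilb_delta_fam d0 d1 (f : forall l : R, 'M[R[i]]_(d1 l, d0 l)) l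
    (w : 'cV[R[i]]_(d0 l)) :
  fHilb f (delta_fam w) = delta_fam (f l *m w).
Proof.
apply: functional_extensionality_dep => l'; rewrite /fHilb.
have [->|l'l] := eqVneq l' l; first by rewrite !delta_fam_eq.
by rewrite !delta_fam_neq // mulmx0.
Qed.

Lemma wnorm2_ge0 (d : R -> nat) (tau : R) (v : fam d) : (0 <= wnorm2 d tau v)%E.
Proof. by apply: esum_ge0 => l _; rewrite lee_fin mulr_ge0 ?expR_ge0 ?sqnorm_ge0. Qed.

Lemma wnorm2_delta_fam d l (w : 'cV[R[i]]_(d l)) tau :
  wnorm2 d tau (delta_fam w) = (expR (2 * tau * l) * sqnorm w)%:E.
Proof.
rewrite /wnorm2 (esumT_support1 _ (t := l)) ?delta_fam_eq // => [x|x xl].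
  by rewrite lee_fin mulr_ge0 ?expR_ge0 ?sqnorm_ge0.
by rewrite delta_fam_neq // sqnorm0 mulr0.
Qed.

End SpectralFamilies.

Section NuclearPairMorphisms.
Variables (R : realType) (d0 d1 : R -> nat).

Lemma cont_check_Echeck (g : fam d0 -> fam d1) :
  cont_check g -> forall v, Echeck d0 v -> Echeck d1 (g v).
Proof.
move=> gc v [tau tau0 vfin]; have [tau' tau'0 [C C0 gC]] := gc tau tau0.
exists tau' => //; apply: le_lt_trans (gC v vfin) _.
by rewrite lte_mul_pinfty // lee_fin ltW.
Qed.

Lemma cont_hat_Ehat (g : fam d0 -> fam d1) :
  cont_hat g -> forall v, Ehat d0 v -> Ehat d1 (g v).
Proof.
move=> gc v vfin tau' tau'0; have [tau tau0 [C C0 gC]] := gc tau' tau'0.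
by apply: le_lt_trans (gC v vfin) _; rewrite lte_mul_pinfty ?vfin // lee_fin ltW.
Qed.

Variable f : forall l : R, 'M[R[i]]_(d1 l, d0 l).

Lemma fHilb_linear_on (P : set (fam d0)) : linear_on P (fHilb f).
Proof.
move=> a u v _ _; apply: functional_extensionality_dep => l.
by rewrite /fHilb mulmxDr scalemxAr.
Qed.

Lemma wnorm2_fHilb_le (C t a : R) (v : fam d0) : 0 <= C ->
  (forall l, opnorm (f l) <= C * expR (t * l)) ->
  (wnorm2 d1 a (fHilb f v) <= (C ^+ 2)%:E * wnorm2 d0 (a + t) v)%E.
Proof.
move=> C0 fC; apply: le_trans (le_esumZl _ (sqr_ge0 C) _) => [|l].
  apply: le_esum => l _; rewrite -EFinM lee_fin /fHilb.
  have -> : C ^+ 2 * (expR (2 * (a + t) * l) * sqnorm (v l))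
           = expR (2 * a * l) * ((C * expR (t * l)) ^+ 2 * sqnorm (v l)).
    have expE : expR (2 * (a + t) * l) = expR (2 * a * l) * expR (t * l) ^+ 2.
      by rewrite -expRM_natl -expRD; congr expR; ring.
    by rewrite expE; ring.
  rewrite ler_wpM2l ?expR_ge0 //; apply: le_trans (sqnorm_mul_le_opnorm _ _) _.
  by rewrite ler_wpM2r ?sqnorm_ge0 // ler_sqr ?nnegrE ?opnorm_ge0 ?mulr_ge0 ?expR_ge0.
by rewrite lee_fin mulr_ge0 ?expR_ge0 ?sqnorm_ge0.
Qed.

Lemma fHilb_nuclear_pair_morphism :
  (forall t, 0 < t -> exists2 C, 0 <= C & forall l, opnorm (f l) <= C * expR (t * l)) ->
  nuclear_pair_morphism (fHilb f) (fHilb f).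
Proof.
move=> growth.
have shift t : 0 < t -> exists2 C, 0 < C &
    forall a v, (wnorm2 d1 a (fHilb f v) <= C%:E * wnorm2 d0 (a + t) v)%E.
  move=> t0; have [C C0 fC] := growth t t0.
  exists (C ^+ 2 + 1); first by rewrite ltr_wpDl ?sqr_ge0.
  move=> a v; apply: le_trans (wnorm2_fHilb_le a v C0 fC) _.
  by rewrite lee_wpmul2r ?wnorm2_ge0 // lee_fin lerDl.
have fc : cont_check (fHilb f).
  move=> tau tau0; have tau2 : 0 < tau / 2 by rewrite divr_gt0.
  have [C C0 fC] := shift _ tau2; exists (tau / 2) => //; exists C => // v _.
  by have := fC (tau / 2) v; rewrite -splitr.
have fh : cont_hat (fHilb f).
  move=> tau' tau'0; have tau2 : 0 < tau' / 2 by rewrite divr_gt0.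
  have [C C0 fC] := shift _ tau2; exists (tau' / 2) => //; exists C => // v _.
  by have := fC (- tau') v; rewrite (_ : - tau' + tau' / 2 = - (tau' / 2)) //; lra.
split=> //; first exact: cont_check_Echeck; first exact: cont_hat_Ehat.
by split; apply: fHilb_linear_on.
Qed.

Lemma opnorm_bound_of_cont_check (g : fam d0 -> fam d1) :
  discrete_spectral_data d0 -> cont_check g ->
  (forall v, Echeck d0 v -> fHilb f v = g v) ->
  forall t, 0 < t -> exists2 K, 0 <= K &
    forall l, spectrum d0 l -> opnorm (f l) <= K * expR (t * l).
Proof.
move=> hd0 gc fg t t0; have [M Mbound] := spectrum_bounded_below hd0.
have [tau' tau'0 [C C0 gC]] := gc t t0.
exists (Num.sqrt C * expR (tau' * M)); first by rewrite mulr_ge0 ?sqrtr_ge0 ?expR_ge0.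
move=> l dl; apply: opnorm_le => [|w]; first by rewrite !mulr_ge0 ?sqrtr_ge0 ?expR_ge0.
have wfin : (wnorm2 d0 t (delta_fam w) < +oo)%E by rewrite wnorm2_delta_fam ltry.
have := gC _ wfin; rewrite -fg; last by exists t.
rewrite fHilb_delta_fam !wnorm2_delta_fam -EFinM lee_fin.
have -> : (Num.sqrt C * expR (tau' * M) * expR (t * l)) ^+ 2 * sqnorm w
    = expR (2 * (tau' * M)) * (C * (expR (2 * t * l) * sqnorm w)).
  by rewrite !exprMn sqr_sqrtr ?(ltW C0) // -!expRM_natl [2 * (t * l)]mulrA; ring.
move=> fw_le; apply: le_trans (ler_wpM2l (expR_ge0 (2 * (tau' * M))) fw_le).
rewrite [leRHS]mulrA -expRD ler_peMl ?sqnorm_ge0 //.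
apply: le_trans (expR_ge1Dx _); rewrite lerDl.
have lM : 0 <= M + l by have := Mbound l dl; lra.
by have := mulr_ge0 (ltW tau'0) lM; nra.
Qed.

End NuclearPairMorphisms.

Theorem lemma3p40 (R : realType) (d0 d1 : R -> nat)
  (hd0 : discrete_spectral_data d0) (hd1 : discrete_spectral_data d1)
  (ne0 : spectrum d0 !=set0) (ne1 : spectrum d1 !=set0)
  (f : forall l : R, 'M[R[i]]_(d1 l, d0 l)) :
  (exists (fcheck fhat : fam d0 -> fam d1),
      nuclear_pair_morphism fcheck fhat /\
      (forall v, Echeck d0 v -> fHilb f v = fcheck v))
  <->
  (forall t : R, 0 < t -> exists2 C : R, 0 < C &
     forall l : R, spectrum d0 l -> spectrum d1 l ->
       opnorm (f l) < C * expR (t * l)).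
Proof.
split.
- move=> [fc [fh [[_ _ _ [fc_cont _] _] fc_eq]]] t t0.
  have [K K0 fK] := opnorm_bound_of_cont_check hd0 fc_cont fc_eq t0.
  exists (K + 1) => [|l dl0 _]; first by rewrite ltr_wpDl.
  by apply: le_lt_trans (fK l dl0) _; rewrite ltr_pM2r ?expR_gt0 // ltrDl.
- move=> growth; exists (fHilb f), (fHilb f); split => //.
  apply: fHilb_nuclear_pair_morphism => t t0; have [C C0 fC] := growth t t0.
  exists C => [|l]; first exact: ltW.
  have Cexp0 : 0 <= C * expR (t * l) by rewrite mulr_ge0 ?expR_ge0 ?ltW.
  have [dl0|dl0] := posnP (d0 l); first by rewrite opnorm_dim0 //; right.
  have [dl1|dl1] := posnP (d1 l); first by rewrite opnorm_dim0 //; left.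
  exact/ltW/fC.
Qed.
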